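(* Let $W$ be the Witt algebra with basis $\{x_n\mid n\in\mathbb{Z}\}$ and bracket $[x_m,x_n]=(n-m)x_{m+n}$, and let $V$ be a left-symmetric algebra structure on the underlying space of $W$ with product $x_mx_n=f(m,n)x_{m+n}$ for some $f:\mathbb{Z}\times\mathbb{Z}\to\mathbb{C}$ and with $x_mx_n-x_nx_m=(n-m)x_{m+n}$. Then $V$, regarded as a $W$-module via left multiplication, is indecomposable, i.e. it is not a direct sum of two proper submodules.
   Context: A left-symmetric algebra is a vector space with bilinear product satisfying $(xy)z-x(yz)=(yx)z-y(xz)$; left multiplication gives a representation of the commutator Lie algebra. *)

From HB Require Import structures.
From mathcomp Require Import all_boot all_order all_algebra.
From mathcomp Require Import reals.
From mathcomp Require Import complex.
Set Implicit Arguments. Unset Strict Implicit. Unset Printing Implicit Defensive.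
Import Order.TTheory GRing.Theory Num.Theory.
Local Open Scope ring_scope.

(* A vector of V (= underlying space of the Witt algebra, basis x_n, n in Z) *)
(* is represented by its coordinate function int -> C, with finite support. *)

Definition finsupp (K : Type) (zero : K) (v : int -> K) : Prop :=
  exists s : seq int, forall n, n \notin s -> v n = zero.

Section Witt.
Variable R : realType.
Local Notation C := (R[i]).

(* (x_m x_n) x_p - x_m (x_n x_p) = (x_n x_m) x_p - x_n (x_m x_p).            *)
Definition left_symmetric (f : int -> int -> C) : Prop :=
  forall m n p : int,
    f m n * f (m + n) p - f n p * f m (n + p) =
    f n m * f (n + m) p - f m p * f n (m + p).

Definition witt_commutator (f : int -> int -> C) : Prop :=
  forall m n : int, f m n - f n m = (n - m)%:~R.

(* x_m v = sum_k v_k f(m,k) x_{m+k}, i.e. coordinate j is f(m,j-m) v_{j-m}.  *)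
Definition lmul (f : int -> int -> C) (m : int) (v : int -> C) : int -> C :=
  fun j => f m (j - m) * v (j - m).

Definition submodule (f : int -> int -> C) (U : (int -> C) -> Prop) : Prop :=
  [/\ (forall v, U v -> finsupp 0 v),
      U (fun _ => 0),
      (forall (a : C) u v, U u -> U v -> U (fun k => a * u k + v k)) &
      (forall m v, U v -> U (lmul f m v))].

Definition proper_sub (U : (int -> C) -> Prop) : Prop :=
  exists v, finsupp 0 v /\ ~ U v.

Definition direct_sum (U1 U2 : (int -> C) -> Prop) : Prop :=
  (forall v, U1 v -> U2 v -> v = (fun _ => 0)) /\
  (forall v, finsupp 0 v ->
     exists v1 v2, [/\ U1 v1, U2 v2 & v = (fun k => v1 k + v2 k)]).

Definition indecomposable (f : int -> int -> C) : Prop :=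
  ~ exists U1 U2, [/\ submodule f U1, submodule f U2,
                      proper_sub U1, proper_sub U2 & direct_sum U1 U2].
End Witt.

From HB Require Import structures.
From mathcomp Require Import all_boot all_order all_algebra.
From mathcomp Require Import reals.
From mathcomp Require Import complex.
From mathcomp Require Import zify ring.
From Stdlib Require Import Classical FunctionalExtensionality.
Import GRing.Theory Num.Theory.
Local Open Scope ring_scope.

(* The eigenvalues [k + f(0,0)] of [x_0] are pairwise distinct, so every
   submodule is spanned by the basis vectors [x_k] it contains, and the
   decomposition splits the indices into two classes.  Whenever
   [f(m,j) <> 0], left multiplication by [x_m] sends [x_j] to a nonzero
   multiple of [x_(m+j)], so both indices lie in the same class.  A class
   missing some index [k] would force [f(m,j) = 0] at enough places that
   three left-symmetry identities give [8 f(0,0) + 5 k = 0]; the same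
   holds for [2k], hence [k = 0], which is absurd. *)

Lemma lincomb3_eq0 {K : comPzRingType} (c1 c2 c3 : K)
    {l1 r1 l2 r2 l3 r3 z : K} :
  l1 = r1 -> l2 = r2 -> l3 = r3 ->
  z = c1 * (l1 - r1) + c2 * (l2 - r2) + c3 * (l3 - r3) -> z = 0.
Proof. by move=> -> -> -> ->; rewrite !subrr !mulr0 !addr0. Qed.

Definition single {K : nmodType} (j : int) (c : K) : int -> K :=
  fun k => if k == j then c else 0.

Lemma single_coord_eq {K : nmodType} (v : int -> K) j :
  (forall k, k != j -> v k = 0) -> single j (v j) = v.
Proof.
move=> v_supp; apply: functional_extensionality => k; rewrite /single.
by case: eqP => [->//|/eqP k_j]; rewrite v_supp.
Qed.

Section WittLeftSymmetric.

Context {R : realType} {f : int -> int -> R[i]}.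
Hypotheses (f_lsym : left_symmetric f) (f_comm : witt_commutator f).

Lemma witt_comm_swap m n : f m n = f n m + (n - m)%:~R.
Proof. by rewrite -(f_comm m n) addrC subrK. Qed.

Lemma witt_lsym m n p :
  (n - m)%:~R * f (m + n) p = f n p * f m (n + p) - f m p * f n (m + p).
Proof.
have := f_lsym m n p; rewrite (addrC n m) -(f_comm m n) => /eqP.
rewrite -subr_eq0 => /eqP e.
by apply/eqP; rewrite -subr_eq0 -e; apply/eqP; ring.
Qed.

Lemma witt_lsym_at m n p q r s : q = m + n -> r = n + p -> s = m + p ->
  (n - m)%:~R * f q p = f n p * f m r - f m p * f n s.
Proof. by move=> -> -> ->; exact: witt_lsym. Qed.

Section ClosedClass.

Variable Q : int -> Prop.
Hypotheses (Q0 : Q 0)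
  (Q_closed : forall m j, f m j != 0 -> (Q (m + j) <-> Q j))
  (Q_f0 : forall j, Q j -> f 0 j = j%:~R + f 0 0).

Lemma f_across_eq0 m j : ~ (Q (m + j) <-> Q j) -> f m j = 0.
Proof. by move=> nQ; case: (eqVneq (f m j) 0) => // /Q_closed. Qed.

Lemma gap_neq0 {k} : ~ Q k -> k != 0.
Proof. by move=> nQk; apply/eqP => k0; rewrite k0 in nQk. Qed.

Lemma gap_fNk {k} : ~ Q k -> f (- k) k = 0.
Proof. by move=> nQk; apply: f_across_eq0; rewrite addNr; tauto. Qed.

Lemma gap_fkN {k} : ~ Q k -> f k (- k) = (- (k + k))%:~R.
Proof.
by move=> nQk; rewrite witt_comm_swap gap_fNk // add0r opprD.
Qed.

Lemma gap_Q_opp {k} : ~ Q k -> Q (- k).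
Proof.
move=> nQk; have : f k (- k) != 0.
  by rewrite gap_fkN // intr_eq0 oppr_eq0; have := gap_neq0 nQk; lia.
by move/Q_closed; rewrite addrN; tauto.
Qed.

Lemma gap_f_dbl {k} : ~ Q k -> f (k + k) (- k) = 0.
Proof.
by move=> nQk; apply: f_across_eq0; rewrite addrK; have := gap_Q_opp nQk; tauto.
Qed.

Lemma gap_dbl {k} : ~ Q k -> ~ Q (k + k).
Proof.
move=> nQk Qkk; have : f (- k) (k + k) != 0.
  rewrite witt_comm_swap (gap_f_dbl nQk) add0r intr_eq0.
  by have := gap_neq0 nQk; lia.
by move/Q_closed; rewrite addKr; tauto.
Qed.

Lemma gap_f00 {k} : ~ Q k -> 8 * f 0 0 + 5 * k%:~R = 0.
Proof.
move=> nQk; have k2_neq0 : ((k + k)%:~R : R[i]) != 0.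
  by rewrite intr_eq0; have := gap_neq0 nQk; lia.
have e1 := witt_lsym_at (-k) k 0 0 k (-k) ltac:(lia) ltac:(lia) ltac:(lia).
rewrite (gap_fNk nQk) (gap_fkN nQk) in e1.
have e2 := witt_lsym_at (k + k) (-k) (-k) k (- (k + k)) k
  ltac:(lia) ltac:(lia) ltac:(lia).
rewrite (gap_fkN nQk) (gap_fkN (gap_dbl nQk)) in e2.
rewrite (gap_f_dbl nQk) (gap_fNk nQk) in e2.
have e3 := witt_lsym_at (-k) k (-k) 0 0 (- k - k)
  ltac:(lia) ltac:(lia) ltac:(lia).
have f_k_2k : f (- k - k) k = 0.
  by apply: f_across_eq0; rewrite subrK; have := gap_Q_opp nQk; tauto.
rewrite (Q_f0 _ (gap_Q_opp nQk)) (gap_fkN nQk) in e3.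
rewrite (witt_comm_swap k (- k - k)) f_k_2k in e3.
apply: (mulfI k2_neq0); rewrite mulr0.
apply: (lincomb3_eq0 4 3 4 e1 e2 e3).
rewrite ?intrD ?intrN ?intrB; ring.
Qed.

Lemma closed_class_full k : Q k.
Proof.
apply: NNPP => nQk.
have : 5 * k%:~R = (8 * f 0 0 + 5 * (k + k)%:~R) - (8 * f 0 0 + 5 * k%:~R).
  by rewrite intrD; ring.
rewrite (gap_f00 nQk) (gap_f00 (gap_dbl nQk)) subrr.
by apply/eqP; rewrite mulf_eq0 pnatr_eq0 intr_eq0 (negbTE (gap_neq0 nQk)).
Qed.

End ClosedClass.

Lemma f0_shift m j : f m j != 0 ->
  f 0 (m + j) - (m + j)%:~R = f 0 j - j%:~R.
Proof.
move=> fmj; have := witt_lsym 0 m j; rewrite !add0r subr0 => /eqP.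
rewrite -subr_eq0 => /eqP e; apply: (mulfI fmj).
by apply/eqP; rewrite -subr_eq0 -oppr_eq0 -e; apply/eqP; rewrite intrD; ring.
Qed.

Lemma f0_affine k : f 0 k = k%:~R + f 0 0.
Proof.
pose Q j := f 0 j - j%:~R = f 0 0.
have Q_f0 j : Q j -> f 0 j = j%:~R + f 0 0 by rewrite /Q => <-; ring.
apply/Q_f0/(closed_class_full Q _ _ Q_f0); first by rewrite /Q subr0.
by move=> m j /f0_shift; rewrite /Q => ->.
Qed.

Section Submodule.

Context {U : (int -> R[i]) -> Prop} (U_sub : submodule f U).

Lemma submodule_scale a u : U u -> U (fun k => a * u k).
Proof.
have [_ U0 U_lin _] := U_sub => Uu.
suff -> : (fun k => a * u k) = (fun k => a * u k + 0) by exact: U_lin.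
by apply: functional_extensionality => k; rewrite addr0.
Qed.

Lemma submodule_single_scale j c : c != 0 -> U (single j c) -> U (single j 1).
Proof.
move=> c_neq0 /(submodule_scale c^-1).
suff -> : (fun k => c^-1 * single j c k) = single j 1 by [].
by apply: functional_extensionality => k; rewrite /single; case: eqP;
  rewrite ?mulVf ?mulr0.
Qed.

Lemma submodule_spanned v : (forall k, U (single k 1)) -> finsupp 0 v -> U v.
Proof.
have [_ U0 U_lin _] := U_sub => U_single [s]; elim: s v => [|t s IH] v v_supp.
  suff -> : v = (fun _ => 0) by [].
  by apply: functional_extensionality => n; apply: v_supp.
pose v' k := if k == t then 0 else v k.
suff -> : v = (fun k => v t * single t 1 k + v' k).
  apply: U_lin => //; apply: IH => n n_s; rewrite /v'.
  by case: eqP => // /eqP n_t; apply: v_supp; rewrite inE negb_or n_t.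
apply: functional_extensionality => k; rewrite /v' /single.
by case: eqP => [->|_]; rewrite ?mulr1 ?addr0 ?mulr0 ?add0r.
Qed.

Lemma submodule_shift m j :
  f m j != 0 -> U (single j 1) -> U (single (m + j) 1).
Proof.
have [_ _ _ U_lmul] := U_sub => fmj /(U_lmul m).
suff -> : lmul f m (single j 1) = single (m + j) (f m j).
  exact: submodule_single_scale.
apply: functional_extensionality => k.
rewrite /lmul /single subr_eq (addrC j m).
by case: eqP => [->|_]; rewrite ?(addrC m j) ?addrK ?mulr1 ?mulr0.
Qed.

Lemma submodule_eigen_shift k v : U v -> U (fun i => (i - k)%:~R * v i).
Proof.
have [_ _ U_lin U_lmul] := U_sub => Uv.
suff -> : (fun i => (i - k)%:~R * v i) =
          (fun i => - f 0 k * v i + lmul f 0 v i).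
  by apply: U_lin => //; apply: U_lmul.
apply: functional_extensionality => i.
by rewrite /lmul subr0 (f0_affine i) (f0_affine k) intrB; ring.
Qed.

(* [x_0 - (k + f(0,0))] kills the [x_k]-coordinate and multiplies the
   [x_i]-coordinate by [i - k], so it shrinks the support of [v]. *)
Lemma submodule_single_coord_bounded n s v j :
  (size s <= n)%N -> (forall k, k \notin s -> v k = 0) -> U v ->
  U (single j (v j)).
Proof.
elim: n s v => [|n IH] s v s_le v_supp Uv.
  rewrite single_coord_eq // => k _; apply: v_supp.
  by move: s_le; rewrite leqn0 => /nilP ->.
have [[k [k_j vk_neq0]]|v_single] := classic (exists k, k != j /\ v k != 0);
  last first.
  rewrite single_coord_eq // => i i_j; apply: NNPP => vi_neq0.
  by apply: v_single; exists i; split=> //; apply/eqP.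
have k_s : k \in s.
  by apply: contraNT vk_neq0 => /v_supp ->.
pose w i := (i - k)%:~R * v i.
have w_supp i : i \notin filter (predC1 k) s -> w i = 0.
  rewrite /w mem_filter negb_and /= negbK => /orP[/eqP ->|/v_supp ->].
    by rewrite subrr mul0r.
  by rewrite mulr0.
have w_size : (size (filter (predC1 k) s) <= n)%N.
  have := count_predC (predC1 k) s; rewrite size_filter.
  have : (0 < count (predC (predC1 k)) s)%N.
    by rewrite -has_count; apply/hasP; exists k => //=; rewrite eqxx.
  lia.
have := IH _ w w_size w_supp (submodule_eigen_shift k v Uv).
have jk_neq0 : ((j - k)%:~R : R[i]) != 0 by rewrite intr_eq0 subr_eq0 eq_sym.
move/(submodule_scale ((j - k)%:~R)^-1).
suff -> : (fun i => ((j - k)%:~R)^-1 * single j (w j) i) = single j (v j) by [].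
apply: functional_extensionality => i; rewrite /single /w.
by case: eqP => _; rewrite ?mulKf ?mulr0.
Qed.

Lemma submodule_single_coord v j : U v -> U (single j (v j)).
Proof.
have [U_supp _ _ _] := U_sub => Uv; have [s v_supp] := U_supp v Uv.
exact: submodule_single_coord_bounded _ _ _ _ (leqnn _) v_supp Uv.
Qed.

End Submodule.

Section DirectSum.

Context {U1 U2 : (int -> R[i]) -> Prop}.
Hypotheses (U1_sub : submodule f U1) (U2_sub : submodule f U2)
  (U12_sum : direct_sum U1 U2).

Lemma direct_sum_single_excl j : U1 (single j 1) -> U2 (single j 1) -> False.
Proof.
have [U12_cap _] := U12_sum => U1j U2j.
have := congr1 (fun v => v j) (U12_cap _ U1j U2j).
by rewrite /single eqxx => /eqP; rewrite oner_eq0.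
Qed.

Lemma direct_sum_single_cover j : U1 (single j 1) \/ U2 (single j 1).
Proof.
have [_ U12_cover] := U12_sum.
have [|v1 [v2 [U1v1 U2v2 v_sum]]] := U12_cover (single j 1).
  by exists [:: j] => k; rewrite inE /single => /negbTE ->.
have v12_j : 1 = v1 j + v2 j.
  by have := congr1 (fun v => v j) v_sum; rewrite /single eqxx.
have [v1j_eq0|v1j_neq0] := eqVneq (v1 j) 0.
  right; rewrite v12_j v1j_eq0 add0r.
  exact: submodule_single_coord U2_sub _ _ U2v2.
left; apply: (submodule_single_scale U1_sub _ _ v1j_neq0).
exact: submodule_single_coord U1_sub _ _ U1v1.
Qed.

Lemma direct_sum_shift m j : f m j != 0 ->
  (U1 (single (m + j) 1) <-> U1 (single j 1)).
Proof.
move=> fmj; split=> [U1mj|]; last exact: submodule_shift.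
have [//|U2j] := direct_sum_single_cover j.
by case: (direct_sum_single_excl _ U1mj); apply: submodule_shift.
Qed.

End DirectSum.

End WittLeftSymmetric.

Theorem lemma3p3 (R : realType) (f : int -> int -> R[i]) :
  left_symmetric f -> witt_commutator f -> indecomposable f.
Proof.
move=> f_lsym f_comm [U1 [U2 [U1_sub U2_sub [v1 [v1_supp U1v1]]]]].
move=> [v2 [v2_supp U2v2]] U12_sum.
pose Q j := U1 (single j 1) <-> U1 (single 0 1).
have Q_all j : Q j.
  apply: (closed_class_full f_lsym f_comm Q) => [|m k fmk|k _]; rewrite /Q.
  - by [].
  - by rewrite (direct_sum_shift f_lsym f_comm U1_sub U2_sub U12_sum _ _ fmk).
  - exact: f0_affine.
have [U1_0|U1_0] := classic (U1 (single 0 1)).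
  by apply/U1v1/(submodule_spanned U1_sub) => // k; apply/Q_all.
apply/U2v2/(submodule_spanned U2_sub) => // k.
have [U1k|//] := direct_sum_single_cover f_lsym f_comm U1_sub U2_sub U12_sum k.
by case: U1_0; apply: (Q_all k).1.
Qed.
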